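(* Let $\mathcal H$ be a complex Hilbert space, let $a \in (\tfrac12, \infty) \setminus \{1\}$, and let $X, Y$ be finite-dimensional subspaces of $\mathcal H$ with $S_a(X,Y) \ne \emptyset$. Then there exists $k \in \mathbb N \cup \{0\}$, $k \le \dim \mathcal H$, such that $\dim X = \dim Y = k$ and $\dim Z = k$ for every $Z \in S_a(X,Y)$.
   Context: For a closed subspace $X$ of $\mathcal H$, $P_X$ is the orthogonal projection onto $X$. For finite-dimensional subspaces $X,Y$ and $a\in\mathbb R$, $S_a(X,Y)$ denotes the set of all finite-dimensional subspaces $Z$ of $\mathcal H$ such that $a(P_X+P_Y)+(1-2a)P_Z$ is a finite-rank (self-adjoint, idempotent) projection. *)

From mathcomp Require Import all_boot all_algebra.
From mathcomp Require Import complex reals.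
Set Implicit Arguments. Unset Strict Implicit. Unset Printing Implicit Defensive.
Import GRing.Theory Num.Theory.
Local Open Scope ring_scope.
Local Open Scope complex_scope.

Section Hilbert.
Variables (R : realType) (V : lmodType R[i]) (ip : V -> V -> R[i]).

Definition is_inner_product : Prop :=
  [/\ (forall (c : R[i]) (u v w : V), ip (c *: u + v) w = c * ip u w + ip v w),
      (forall u v : V, ip u v = (ip v u)^*),
      (forall v : V, 0 <= ip v v) &
      (forall v : V, ip v v = 0 -> v = 0)].

(* completeness w.r.t. the norm ||v||^2 = <v,v> (stated with squared norms) *)
Definition is_complete : Prop :=
  forall u : nat -> V,
    (forall e : R, 0 < e -> exists N : nat, forall m n : nat,
        (N <= m)%N -> (N <= n)%N -> ip (u m - u n) (u m - u n) < e%:C) ->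
    exists l : V, forall e : R, 0 < e -> exists N : nat, forall n : nat,
        (N <= n)%N -> ip (u n - l) (u n - l) < e%:C.

Definition lin_indep (k : nat) (b : 'I_k -> V) : Prop :=
  forall c : 'I_k -> R[i], \sum_(i < k) c i *: b i = 0 -> forall i, c i = 0.

Definition has_dim (X : V -> Prop) (k : nat) : Prop :=
  exists b : 'I_k -> V, lin_indep b /\
    (forall v : V, X v <-> exists c : 'I_k -> R[i], v = \sum_(i < k) c i *: b i).

Definition fin_dim_subspace (X : V -> Prop) : Prop := exists k, has_dim X k.

Definition is_orth_proj (X : V -> Prop) (P : V -> V) : Prop :=
  forall v : V, X (P v) /\ (forall x : V, X x -> ip (v - P v) x = 0).

Definition is_fr_projection (T : V -> V) : Prop :=
  [/\ (forall v, T (T v) = T v),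
      (forall u v, ip (T u) v = ip u (T v)) &
      exists k, has_dim (fun w => exists v, w = T v) k].

Definition S_a (a : R) (X Y Z : V -> Prop) : Prop :=
  fin_dim_subspace Z /\
  exists PX PY PZ : V -> V,
    [/\ is_orth_proj X PX, is_orth_proj Y PY, is_orth_proj Z PZ &
        is_fr_projection
          (fun v => a%:C *: (PX v + PY v) + (1 - 2 * a)%:C *: PZ v)].

End Hilbert.

From HB Require Import structures.
From mathcomp Require Import all_boot all_order all_algebra.
From mathcomp Require Import complex reals.
From mathcomp Require Import ring lra.
Set Implicit Arguments. Unset Strict Implicit. Unset Printing Implicit Defensive.
Import Order.TTheory GRing.Theory Num.Theory.
Local Open Scope ring_scope.
Local Open Scope complex_scope.

(* Write T = a (P_X + P_Y) + (1 - 2a) P_Z, a finite-rank self-adjoint projection.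
   For 1/2 < a < 1 the quadratic form
     <T v, v> = a |P_X v|^2 + a |P_Y v|^2 + (1 - 2a) |P_Z v|^2
   shows that T is injective on ran P_X and P_X is injective on ran T, so
   dim X = rank T, and likewise dim Y = rank T.  Taking traces,
   rank T = a dim X + a dim Y + (1 - 2a) dim Z, which forces dim Z = rank T.
   For a > 1, P_Z = a' (P_X + P_Y) + (1 - 2a') T with a' = a / (2a - 1) in
   (1/2, 1), and the first case applies with Z and T exchanged.
   The traces are those of coordinate matrices over a common finite spanning
   family of the ranges; this family may be linearly dependent, which is
   harmless because the coordinate matrix of the relation squares to zero. *)

Section Coordinates.
Variables (R : realType) (V : lmodType R[i]).

Definition lincomb k (b : 'I_k -> V) (c : 'rV[R[i]]_k) : V := \sum_(i < k) c 0 i *: b i.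

Fact lincomb_is_linear k (b : 'I_k -> V) : linear (lincomb b).
Proof.
move=> x c d; rewrite /lincomb scaler_sumr -big_split; apply: eq_bigr => i _.
by rewrite !mxE scalerDl scalerA.
Qed.

HB.instance Definition _ k (b : 'I_k -> V) :=
  GRing.isLinear.Build _ _ _ _ (lincomb b) (lincomb_is_linear b).

Lemma lincomb_row k (b : 'I_k -> V) (c : 'I_k -> R[i]) :
  \sum_(i < k) c i *: b i = lincomb b (\row_i c i).
Proof. by apply: eq_bigr => i _; rewrite mxE. Qed.

Lemma lincomb_delta k (b : 'I_k -> V) i : lincomb b (delta_mx 0 i) = b i.
Proof.
rewrite /lincomb (bigD1 i) //= big1 ?addr0; first by rewrite mxE !eqxx scale1r.
by move=> j /negbTE ne; rewrite mxE ne andbF scale0r.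
Qed.

Lemma eq_lincomb k (b b' : 'I_k -> V) : b =1 b' -> lincomb b =1 lincomb b'.
Proof. by move=> eq_b c; apply: eq_bigr => i _; rewrite eq_b. Qed.

Lemma lincomb_mul m k (b : 'I_k -> V) (c : 'rV_m) (M : 'M_(m, k)) :
  lincomb b (c *m M) = lincomb (fun i => lincomb b (row i M)) c.
Proof.
rewrite /lincomb; under [RHS]eq_bigr => i _ do rewrite scaler_sumr.
rewrite exchange_big /=; apply: eq_bigr => j _.
rewrite mxE scaler_suml; apply: eq_bigr => i _.
by rewrite mxE scalerA.
Qed.

Lemma lincomb_inj k (b : 'I_k -> V) : lin_indep b -> injective (lincomb b).
Proof.
move=> hb c d /eqP; rewrite -subr_eq0 -linearB => /eqP /(hb (fun i => (c - d) 0 i)) h0.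
by apply/rowP => j; apply/eqP; rewrite -subr_eq0; have := h0 j; rewrite !mxE => ->.
Qed.

Definition concat k1 k2 (b1 : 'I_k1 -> V) (b2 : 'I_k2 -> V) : 'I_(k1 + k2) -> V :=
  fun i => match split i with inl j => b1 j | inr j => b2 j end.

Lemma lincomb_concat k1 k2 (b1 : 'I_k1 -> V) (b2 : 'I_k2 -> V) c1 c2 :
  lincomb (concat b1 b2) (row_mx c1 c2) = lincomb b1 c1 + lincomb b2 c2.
Proof.
rewrite /lincomb big_split_ord; congr (_ + _); apply: eq_bigr => i _.
  by rewrite row_mxEl /concat (unsplitK (inl _ i)).
by rewrite row_mxEr /concat (unsplitK (inr _ i)).
Qed.

End Coordinates.

Lemma mxtrace_sqr0 (F : fieldType) n (E : 'M[F]_n) : E *m E = 0 -> \tr E = 0.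
Proof.
move=> hE; have := mulmx_base E; have := col_base_full E.
have := row_base_free E.
move: (col_base E) (row_base E) => C D /row_freeP[D' hD] /row_fullP[C' hC] hCD.
rewrite -hCD mxtrace_mulC; rewrite -hCD in hE.
suff -> : D *m C = 0 by rewrite mxtrace0.
have -> : D *m C = C' *m (C *m D *m (C *m D)) *m D'.
  by rewrite !mulmxA hC mul1mx -!mulmxA hD mulmx1.
by rewrite hE mulmx0 mul0mx.
Qed.

Section InnerProduct.
Variables (R : realType) (V : lmodType R[i]) (ip : V -> V -> R[i]).
Hypothesis Hip : is_inner_product ip.

Lemma ipDl u v w : ip (u + v) w = ip u w + ip v w.
Proof. by case: Hip => H _ _ _; have := H 1 u v w; rewrite scale1r mul1r. Qed.

Lemma ip0l w : ip 0 w = 0.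
Proof. by apply/eqP; rewrite -(inj_eq (addrI (ip 0 w))) -ipDl !addr0. Qed.

Lemma ipZl c u w : ip (c *: u) w = c * ip u w.
Proof. by case: Hip => H _ _ _; have := H c u 0 w; rewrite addr0 ip0l addr0. Qed.

Lemma ipBl u v w : ip (u - v) w = ip u w - ip v w.
Proof. by rewrite ipDl -scaleN1r ipZl mulN1r. Qed.

Lemma ipC u v : ip u v = (ip v u)^*.
Proof. by case: Hip. Qed.

Lemma ip0r u : ip u 0 = 0.
Proof. by rewrite ipC ip0l conjc0. Qed.

Lemma ipDr u v w : ip u (v + w) = ip u v + ip u w.
Proof. by rewrite ipC ipDl rmorphD /= -!ipC. Qed.

Lemma ip_eq0 v : ip v v = 0 -> v = 0.
Proof. by case: Hip => _ _ _; apply. Qed.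

Lemma ip_inj u v : (forall w, ip u w = ip v w) -> u = v.
Proof.
by move=> h; apply/eqP; rewrite -subr_eq0; apply/eqP/ip_eq0; rewrite ipBl h subrr.
Qed.

Definition sqnorm v := complex.Re (ip v v).

Lemma ip_sqnorm v : ip v v = (sqnorm v)%:C.
Proof. by case: Hip => _ _ /(_ v) /ger0_Im h _; rewrite [LHS]complexE h mulr0 addr0. Qed.

Lemma sqnorm_ge0 v : 0 <= sqnorm v.
Proof. by case: Hip => _ _ /(_ v); rewrite ip_sqnorm lecR. Qed.

Lemma sqnorm0 : sqnorm 0 = 0.
Proof. by rewrite /sqnorm ip0l. Qed.

Lemma sqnorm_eq0 v : sqnorm v = 0 -> v = 0.
Proof. by move=> h; apply: ip_eq0; rewrite ip_sqnorm h. Qed.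

Definition sa_proj (L : V -> V) :=
  (forall v, L (L v) = L v) /\ (forall u v, ip (L u) v = ip u (L v)).

Definition range (L : V -> V) (w : V) := exists v, w = L v.

Section SelfAdjointProjection.
Variable L : V -> V.
Hypothesis HL : sa_proj L.

Lemma sa_projK v : L (L v) = L v.
Proof. by case: HL. Qed.

Lemma sa_proj_adj u v : ip (L u) v = ip u (L v).
Proof. by case: HL. Qed.

Lemma sa_projP c u v : L (c *: u + v) = c *: L u + L v.
Proof. by apply: ip_inj => w; rewrite sa_proj_adj !ipDl !ipZl !sa_proj_adj. Qed.

Lemma sa_projD u v : L (u + v) = L u + L v.
Proof. by rewrite -[u]scale1r sa_projP !scale1r. Qed.

Lemma sa_proj0 : L 0 = 0.
Proof. by apply/eqP; rewrite -(inj_eq (addrI (L 0))) -sa_projD !addr0. Qed.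

Lemma sa_projZ c u : L (c *: u) = c *: L u.
Proof. by rewrite -[c *: u]addr0 sa_projP sa_proj0 addr0. Qed.

Lemma sa_proj_lincomb k (b : 'I_k -> V) c : L (lincomb b c) = lincomb (L \o b) c.
Proof.
rewrite /lincomb (big_morph L sa_projD sa_proj0).
by apply: eq_bigr => i _; rewrite sa_projZ.
Qed.

Lemma ip_sa_proj v : ip (L v) v = (sqnorm (L v))%:C.
Proof. by rewrite -ip_sqnorm [RHS]sa_proj_adj sa_projK sa_proj_adj. Qed.

Lemma sqnorm_sa_proj_le v : sqnorm (L v) <= sqnorm v.
Proof.
have ker : L (v - L v) = 0.
  by rewrite -scaleN1r addrC sa_projP sa_projK scaleN1r addNr.
have pyth : ip v v = ip (L v) (L v) + ip (v - L v) (v - L v).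
  have dec : v = L v + (v - L v) by rewrite addrC subrK.
  move: (v - L v) ker dec => w ker dec.
  rewrite {1 2}dec ipDl !ipDr [ip (L v) w]sa_proj_adj -[ip w (L v)]sa_proj_adj ker.
  by rewrite ip0l ip0r add0r addr0.
have := sqnorm_ge0 (v - L v).
by move: pyth; rewrite !ip_sqnorm -rmorphD /= => /complexI ->; lra.
Qed.

End SelfAdjointProjection.

Lemma range_basis L k : sa_proj L -> has_dim (range L) k ->
  exists b : 'I_k -> V, [/\ lin_indep b, forall i, L (b i) = b i &
    forall v, exists c, L v = lincomb b c].
Proof.
move=> hL [b [ind_b span_b]]; exists b; split => // [i|v].
  have [u ->] : range L (b i).
    apply/span_b; exists (fun j => (delta_mx 0 i : 'rV_k) 0 j).
    by rewrite -{1}(lincomb_delta b i).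
  exact: sa_projK.
have [c ->] : exists c, L v = \sum_(i < k) c i *: b i by apply/span_b; exists v.
by exists (\row_i c i); rewrite lincomb_row.
Qed.

Lemma sa_proj_rank_leq L1 L2 k1 k2 : sa_proj L1 -> sa_proj L2 ->
  has_dim (range L1) k1 -> has_dim (range L2) k2 ->
  (forall w, L1 w = w -> L2 w = 0 -> w = 0) -> (k1 <= k2)%N.
Proof.
move=> s1 s2 /(range_basis s1)[b1 [ind1 fix1 _]].
move=> /(range_basis s2)[b2 [_ _ span2]] inj.
have coord v : exists c, L2 v == lincomb b2 c by have [c ->] := span2 v; exists c.
pose M := \matrix_(i < k1) xchoose (coord (b1 i)).
have hM : L2 \o b1 =1 (fun i => lincomb b2 (row i M)).
  by move=> i; rewrite /= rowK; apply/eqP; exact: (xchooseP (coord (b1 i))).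
rewrite leqNgt; apply/negP => lt21.
have /rowV0Pn [c /sub_kermxP cM /eqP[]] : kermx M != 0.
  by rewrite -mxrank_eq0 mxrank_ker subn_eq0 -ltnNge (leq_ltn_trans (rank_leq_col M)).
apply: (lincomb_inj ind1); rewrite linear0; apply: inj.
  by rewrite (sa_proj_lincomb s1); apply: eq_lincomb => i; apply: fix1.
by rewrite (sa_proj_lincomb s2) (eq_lincomb hM) -lincomb_mul cM linear0.
Qed.

Lemma sa_proj_coord_mx L k m (g : 'I_m -> V) : sa_proj L ->
  has_dim (range L) k -> (forall v, exists d, L v = lincomb g d) ->
  exists N : 'M_m, [/\ \tr N = k%:R,
    forall d, lincomb g (d *m N) = L (lincomb g d) &
    forall d, lincomb g d = 0 -> d *m N = 0].
Proof.
move=> sL /(range_basis sL)[b [ind_b fix_b span_b]] span_g.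
have coord_ex v : exists c, L v == lincomb b c by have [c ->] := span_b v; exists c.
pose coord v := xchoose (coord_ex v).
have coordP v : L v = lincomb b (coord v) by apply/eqP/(xchooseP (coord_ex v)).
have gen_ex i : exists d, b i == lincomb g d.
  by have [d gd] := span_g (b i); exists d; rewrite -gd fix_b.
pose A : 'M_(k, m) := \matrix_i xchoose (gen_ex i).
have rowA i : lincomb g (row i A) = b i.
  by rewrite rowK; apply/esym/eqP/(xchooseP (gen_ex i)).
pose B : 'M_(m, k) := \matrix_j coord (g j).
have mulB d : d *m B = coord (lincomb g d).
  apply: (lincomb_inj ind_b); rewrite -coordP (sa_proj_lincomb sL) lincomb_mul.
  by apply: eq_lincomb => j; rewrite rowK -coordP.
have AB : A *m B = 1%:M.
  apply/row_matrixP => i; rewrite row_mul mulB rowA row1.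
  by apply: (lincomb_inj ind_b); rewrite -coordP fix_b lincomb_delta.
exists (B *m A); split=> [|d|d gd0].
- by rewrite mxtrace_mulC AB mxtrace1.
- by rewrite mulmxA lincomb_mul (eq_lincomb rowA) mulB -coordP.
- have coord0 : coord 0 = 0.
    by apply: (lincomb_inj ind_b); rewrite -coordP !linear0 (sa_proj0 sL).
  by rewrite mulmxA mulB gd0 coord0 mul0mx.
Qed.

Lemma rank_sa_proj_comb (P Q Z T : V -> V) p q r t (x y z : R[i]) :
  sa_proj P -> sa_proj Q -> sa_proj Z -> sa_proj T ->
  has_dim (range P) p -> has_dim (range Q) q -> has_dim (range Z) r ->
  has_dim (range T) t ->
  (forall v, T v = x *: P v + y *: Q v + z *: Z v) ->
  t%:R = x * p%:R + y * q%:R + z * r%:R.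
Proof.
move=> sP sQ sZ sT dP dQ dZ dT hT.
have [bP [_ _ spanP]] := range_basis sP dP.
have [bQ [_ _ spanQ]] := range_basis sQ dQ.
have [bZ [_ _ spanZ]] := range_basis sZ dZ.
pose g := concat bP (concat bQ bZ).
have gP v : exists d, P v = lincomb g d.
  by have [c ->] := spanP v; exists (row_mx c 0); rewrite !lincomb_concat !linear0 !addr0.
have gQ v : exists d, Q v = lincomb g d.
  have [c ->] := spanQ v; exists (row_mx 0 (row_mx c 0)).
  by rewrite !lincomb_concat !linear0 add0r addr0.
have gZ v : exists d, Z v = lincomb g d.
  have [c ->] := spanZ v; exists (row_mx 0 (row_mx 0 c)).
  by rewrite !lincomb_concat !linear0 !add0r.
have gT v : exists d, T v = lincomb g d.
  have [[cP eP] [cQ eQ] [cZ eZ]] := And3 (gP v) (gQ v) (gZ v).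
  by exists (x *: cP + y *: cQ + z *: cZ); rewrite hT eP eQ eZ !linearD !linearZ.
have [NP [trP hP kP]] := sa_proj_coord_mx sP dP gP.
have [NQ [trQ hQ kQ]] := sa_proj_coord_mx sQ dQ gQ.
have [NZ [trZ hZ kZ]] := sa_proj_coord_mx sZ dZ gZ.
have [NT [trT hTm kT]] := sa_proj_coord_mx sT dT gT.
pose E := NT - (x *: NP + y *: NQ + z *: NZ).
have hE d : lincomb g (d *m E) = 0.
  rewrite !(mulmxBr, mulmxDr) -!scalemxAr !(linearB, linearD, linearZ) /=.
  by rewrite hTm hP hQ hZ hT !scalerN -!opprD subrr.
have kE d : lincomb g d = 0 -> d *m E = 0.
  move=> gd0; rewrite !(mulmxBr, mulmxDr) -!scalemxAr.
  by rewrite kT // kP // kQ // kZ // !scaler0 !addr0 subr0.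
(* every row of E lies in the kernel of [lincomb g], which E annihilates *)
have EE : E *m E = 0.
  by apply/row_matrixP => i; rewrite row_mul row0 kE // rowE hE.
move/eqP: (mxtrace_sqr0 EE).
by rewrite !(raddfB, raddfD) /= !mxtraceZ trP trQ trZ trT -!opprD subr_eq0 => /eqP.
Qed.

Lemma sqnorm_sa_proj_comb (P Q Z T : V -> V) (x y z : R) v :
  sa_proj P -> sa_proj Q -> sa_proj Z -> sa_proj T ->
  T v = x%:C *: P v + y%:C *: Q v + z%:C *: Z v ->
  sqnorm (T v) = x * sqnorm (P v) + y * sqnorm (Q v) + z * sqnorm (Z v).
Proof.
move=> sP sQ sZ sT hT; apply: (@complexI R).
by rewrite !rmorphD !rmorphM /= -!ip_sa_proj // hT !ipDl !ipZl.
Qed.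

Definition Sa_relation (a : R) (P Q Z T : V -> V) :=
  forall v, T v = a%:C *: P v + a%:C *: Q v + (1 - 2 * a)%:C *: Z v.

Lemma Sa_relationC a P Q Z T : Sa_relation a P Q Z T -> Sa_relation a Q P Z T.
Proof. by move=> hT v; rewrite hT (addrC (a%:C *: P v)). Qed.

Lemma Sa_relation_swap a P Q Z T : 2 * a - 1 != 0 ->
  Sa_relation a P Q Z T -> Sa_relation (a / (2 * a - 1)) P Q T Z.
Proof.
move=> ha hT v; rewrite hT !scalerDr !scalerA -!rmorphM /=.
have -> : (1 - 2 * (a / (2 * a - 1))) * a = - (a / (2 * a - 1)) by field.
have -> : (1 - 2 * (a / (2 * a - 1))) * (1 - 2 * a) = 1 by field.
by rewrite rmorph1 scale1r !rmorphN /= !scaleNr -opprD addrA subrr add0r.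
Qed.

Lemma Sa_rank_left a P Q Z T p t : 1 / 2 < a -> a < 1 ->
  sa_proj P -> sa_proj Q -> sa_proj Z -> sa_proj T -> Sa_relation a P Q Z T ->
  has_dim (range P) p -> has_dim (range T) t -> p = t.
Proof.
move=> a_gt a_lt1 sP sQ sZ sT hT dP dT; apply/eqP; rewrite eqn_leq; apply/andP; split.
- apply: (sa_proj_rank_leq sP sT dP dT) => w Pw Tw; apply: sqnorm_eq0.
  have := sqnorm_sa_proj_comb sP sQ sZ sT (hT w); rewrite Tw Pw sqnorm0.
  have := sqnorm_sa_proj_le sZ w; have := sqnorm_ge0 (Q w); have := sqnorm_ge0 w.
  move: (sqnorm w) (sqnorm (Q w)) (sqnorm (Z w)) => n nQ nZ n0 nQ0 nZn hq.
  have : 0 <= a * nQ + (2 * a - 1) * (n - nZ) by apply: addr_ge0; apply: mulr_ge0; lra.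
  nra.
- apply: (sa_proj_rank_leq sT sP dT dP) => w Tw Pw; apply: sqnorm_eq0.
  have := sqnorm_sa_proj_comb sP sQ sZ sT (hT w); rewrite Tw Pw sqnorm0.
  have := sqnorm_sa_proj_le sQ w; have := sqnorm_ge0 (Z w); have := sqnorm_ge0 w.
  move: (sqnorm w) (sqnorm (Q w)) (sqnorm (Z w)) => n nQ nZ n0 nZ0 nQn hq.
  have : 0 <= a * (n - nQ) + (2 * a - 1) * nZ by apply: addr_ge0; apply: mulr_ge0; lra.
  nra.
Qed.

Lemma Sa_ranks a P Q Z T p q r t : 1 / 2 < a -> a < 1 ->
  sa_proj P -> sa_proj Q -> sa_proj Z -> sa_proj T -> Sa_relation a P Q Z T ->
  has_dim (range P) p -> has_dim (range Q) q -> has_dim (range Z) r ->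
  has_dim (range T) t -> [/\ p = t, q = t & r = t].
Proof.
move=> a_gt a_lt1 sP sQ sZ sT hT dP dQ dZ dT.
have pt := Sa_rank_left a_gt a_lt1 sP sQ sZ sT hT dP dT.
have qt := Sa_rank_left a_gt a_lt1 sQ sP sZ sT (Sa_relationC hT) dQ dT.
split=> //; apply/eqP; rewrite -(eqr_nat R).
have := rank_sa_proj_comb sP sQ sZ sT dP dQ dZ dT hT.
rewrite pt qt -!(rmorph_nat (real_complex R)) -!rmorphM -!rmorphD => /complexI h.
have /eqP : (1 - 2 * a) * (r%:R - t%:R) = 0 :> R by lra.
by rewrite mulf_eq0 subr_eq0 => /orP[/eqP|//]; lra.
Qed.

Lemma has_dimB (A : V -> Prop) k u v : has_dim A k -> A u -> A v -> A (u - v).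
Proof.
case=> b [_ span_b] /span_b[c1 ->] /span_b[c2 ->]; apply/span_b.
exists (fun i => c1 i - c2 i); rewrite !lincomb_row -linearB /=.
by congr lincomb; apply/rowP => i; rewrite !mxE.
Qed.

Section OrthogonalProjection.
Variables (X : V -> Prop) (k : nat) (P : V -> V).
Hypotheses (dX : has_dim X k) (oP : is_orth_proj ip X P).

Lemma orth_proj_id x : X x -> P x = x.
Proof.
move=> Xx; have [XPx orth] := oP x.
apply/esym/eqP; rewrite -subr_eq0; apply/eqP/ip_eq0/orth.
exact: has_dimB dX Xx XPx.
Qed.

Lemma orth_proj_sa_proj : sa_proj P.
Proof.
have orth u v : ip (u - P u) (P v) = 0 by case: (oP u) => _; apply; case: (oP v).
split=> [v | u v]; first by apply: orth_proj_id; case: (oP v).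
have -> : ip (P u) v = ip (P u) (P v).
  by rewrite -[v in LHS](subrK (P v)) ipDr [ip (P u) _]ipC orth conjc0 add0r.
by rewrite -[u in RHS](subrK (P u)) ipDl orth add0r.
Qed.

Lemma has_dim_orth_proj_range : has_dim (range P) k.
Proof.
have [b [ind_b span_b]] := dX; exists b; split=> // w; rewrite -span_b.
split=> [[v ->] | Xw]; first by case: (oP v).
by exists w; rewrite orth_proj_id.
Qed.

End OrthogonalProjection.

Lemma S_a_dim a X Y Z x y : 1 / 2 < a -> a != 1 ->
  has_dim X x -> has_dim Y y -> S_a ip a X Y Z -> x = y /\ has_dim Z x.
Proof.
move=> a_gt a_ne1 dX dY [[z dZ] [PX [PY [PZ [oX oY oZ [TK Tadj [t dT]]]]]]].
have [sX sY sZ] := And3 (orth_proj_sa_proj dX oX) (orth_proj_sa_proj dY oY)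
  (orth_proj_sa_proj dZ oZ).
have [dPX dPY dPZ] := And3 (has_dim_orth_proj_range dX oX)
  (has_dim_orth_proj_range dY oY) (has_dim_orth_proj_range dZ oZ).
pose T v := a%:C *: (PX v + PY v) + (1 - 2 * a)%:C *: PZ v.
have sT : sa_proj T by split.
have hT : Sa_relation a PX PY PZ T by move=> v; rewrite /T scalerDr.
have [a_lt1 | a_ge1] := ltrP a 1.
  have [xt yt zt] := Sa_ranks a_gt a_lt1 sX sY sZ sT hT dPX dPY dPZ dT.
  by split; [rewrite xt yt | rewrite xt -zt].
have a_gt1 : 1 < a by rewrite lt_neqAle eq_sym a_ne1.
have den_neq0 : 2 * a - 1 != 0 by apply/eqP => den0; lra.
have a'_def : a / (2 * a - 1) * (2 * a - 1) = a by rewrite divfK.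
have a'_gt : 1 / 2 < a / (2 * a - 1) by nra.
have a'_lt1 : a / (2 * a - 1) < 1 by nra.
have hZ := Sa_relation_swap den_neq0 hT.
have [xz yz tz] := Sa_ranks a'_gt a'_lt1 sX sY sT sZ hZ dPX dPY dT dPZ.
by split; [rewrite xz yz | rewrite xz].
Qed.

End InnerProduct.

Theorem corollary2p5 (R : realType) (V : lmodType R[i]) (ip : V -> V -> R[i])
    (Hip : is_inner_product ip) (Hcomplete : is_complete ip)
    (a : R) (Ha : 1 / 2 < a) (Ha1 : a != 1)
    (X Y : V -> Prop) (HX : fin_dim_subspace X) (HY : fin_dim_subspace Y)
    (HS : exists Z : V -> Prop, S_a ip a X Y Z) :
  exists k : nat,
    [/\ (exists b : 'I_k -> V, lin_indep b) (* k <= dim H *),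
        has_dim X k, has_dim Y k &
        forall Z : V -> Prop, S_a ip a X Y Z -> has_dim Z k].
Proof.
have [[x dX] [y dY] [Z0 SZ0]] := And3 HX HY HS.
have [xy _] := S_a_dim Hip Ha Ha1 dX dY SZ0.
exists x; split=> //.
- by have [b [ind_b _]] := dX; exists b.
- by rewrite xy.
- by move=> Z /(S_a_dim Hip Ha Ha1 dX dY) [].
Qed.
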